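(* Let $\mathfrak{G}$ be the CFSTR on species $A,B,C,D,E,F$ whose non-flow reactions are $D\rightleftarrows A+B+C$, $E\rightleftarrows A+B+C$, $F\rightleftarrows A+B$, together with the outflow reaction $X\to0$ for each of the six species (and possibly any inflow reactions). Then $\mathfrak{G}$ passes the Jacobian Criterion.
   Context: A reaction $y\to y'$ has complexes $y,y'\in\mathbb{Z}^s_{\ge0}$, $y\neq y'$; $u\rightleftarrows v$ denotes the two reactions $u\to v$ and $v\to u$; inflows $0\to X$ and outflows $X\to0$ are flow reactions. For a list of $s$ reactions $y_k\to y_k'$ on $s$ species: reactant matrix $M$ (row $k$ is $y_k$), reaction matrix $R$ (row $k$ is $y_k-y'_k$), orientation $\operatorname{sign}(\det M\det R)$. A CFSTR with $s$ species passes the Jacobian Criterion if every choice of $s$ distinct reactions containing no inflow reaction yields $s\times s$ reactant and reaction matrices (columns indexed by all species) with nonnegative orientation. *)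

From HB Require Import structures.
From mathcomp Require Import all_boot all_order all_algebra.
Set Implicit Arguments. Unset Strict Implicit. Unset Printing Implicit Defensive.
Import Order.TTheory GRing.Theory Num.Theory.
Local Open Scope ring_scope.

(* A complex on s species: a row vector in Z^s (entries meant to be >= 0). *)
Definition complex (s : nat) := 'rV[int]_s.
(* A reaction y -> y' is the pair (y, y'). *)
Definition reaction (s : nat) := (complex s * complex s)%type.

Definition spec {s : nat} (i : 'I_s) : complex s := \row_(j < s) (j == i)%:R.

Definition inflow {s : nat} (i : 'I_s) : reaction s := (0, spec i).
Definition outflow {s : nat} (i : 'I_s) : reaction s := (spec i, 0).

Definition is_inflow {s : nat} (r : reaction s) : bool :=
  (r.1 == 0) && [exists i : 'I_s, r.2 == spec i].

Definition reactant_mx {s : nat} (f : 'I_s -> reaction s) : 'M[int]_s :=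
  \matrix_(k < s, i < s) (f k).1 0 i.
Definition reaction_mx {s : nat} (f : 'I_s -> reaction s) : 'M[int]_s :=
  \matrix_(k < s, i < s) ((f k).1 0 i - (f k).2 0 i).

Definition orientation {s : nat} (f : 'I_s -> reaction s) : int :=
  sgz (\det (reactant_mx f) * \det (reaction_mx f)).

Definition passes_Jacobian_criterion {s : nat} (N : seq (reaction s)) : Prop :=
  forall f : 'I_s -> reaction s,
    injective f ->
    (forall k, f k \in N) ->
    (forall k, ~~ is_inflow (f k)) ->
    0 <= orientation f.

Definition sA : 'I_6 := inord 0.
Definition sB : 'I_6 := inord 1.
Definition sC : 'I_6 := inord 2.
Definition sD : 'I_6 := inord 3.
Definition sE : 'I_6 := inord 4.
Definition sF : 'I_6 := inord 5.

Definition cABC : complex 6 := spec sA + spec sB + spec sC.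
Definition cAB : complex 6 := spec sA + spec sB.

Definition network_G (ins : seq 'I_6) : seq (reaction 6) :=
  [:: (spec sD, cABC); (cABC, spec sD);
      (spec sE, cABC); (cABC, spec sE);
      (spec sF, cAB); (cAB, spec sF)]
  ++ [seq outflow i | i <- enum 'I_6]
  ++ [seq inflow i | i <- ins].

From mathcomp Require Import all_boot all_order all_algebra.
From mathcomp Require Import perm.
Set Implicit Arguments. Unset Strict Implicit. Unset Printing Implicit Defensive.
Import GRing.Theory Num.Theory.
Local Open Scope ring_scope.

(* The twelve reactions of the network that are not inflows
   (the six non-flow reactions and the six outflows) have explicit integer
   coordinates, recorded in [table].  A choice of six distinct non-inflow
   reactions is, up to reordering, a length-6 sublist of [table]; reordering
   the reactions permutes the rows of both the reactant and the reaction
   matrix by the same permutation, which leaves the orientation unchanged.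
   Hence it suffices to check the orientation of the C(12,6) = 924 sublists
   of length 6, which is done by computation. *)

(* Laplace expansion along the first row, on functions [nat -> nat -> int]
   so that it evaluates by computation. *)
Fixpoint cdet (n : nat) (a : nat -> nat -> int) : int :=
  if n is n'.+1 then
    foldr (fun j acc => a 0%N j * ((-1) ^+ j * cdet n' (fun i k => a i.+1 (bump j k))) + acc)
      0 (iota 0 n)
  else 1.

Lemma det_cdet (n : nat) (a : nat -> nat -> int) :
  \det (\matrix_(i < n, j < n) a i j) = cdet n a.
Proof.
elim: n a => [|n IH] a; first by rewrite det_mx00.
have minorE (j : 'I_n.+1) : \det (row' ord0 (col' j (\matrix_(i < n.+1, k < n.+1) a i k)))
    = cdet n (fun i k => a i.+1 (bump j k)).
  by rewrite -IH; congr (\det _); apply/matrixP => i k; rewrite !mxE lift0.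
rewrite (expand_det_row _ ord0).
under eq_bigr => j _ do rewrite /cofactor minorE mxE add0n.
rewrite -(big_mkord xpredT
  (fun j => a 0%N j * ((-1) ^+ j * cdet n (fun i k => a i.+1 (bump j k))))).
by rewrite /index_iota subn0 unlock.
Qed.

Fixpoint sublists {T : Type} (k : nat) (L : seq T) : seq (seq T) :=
  if L is x :: L' then
    (if k is k'.+1 then map (cons x) (sublists k' L') ++ sublists k L' else [:: [::]])
  else (if k is 0%N then [:: [::]] else [::]).

Lemma mem_sublists (T : eqType) (L u : seq T) : subseq u L -> u \in sublists (size u) L.
Proof.
elim: L u => [|x L IH] [|y u] //=.
have cons_inj : injective (cons x) by move=> v w [].
by case: eqP => [-> /IH | _ /IH]; rewrite mem_cat ?(mem_map cons_inj) => ->; rewrite ?orbT.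
Qed.

(* An injective family with values in a duplicate-free list [L] is a
   reordering of a sublist of [L] (namely of [L] filtered by its range). *)
Lemma injective_sublist (T : eqType) (x0 : T) (L : seq T) (s : nat) (t : 'I_s -> T) :
  uniq L -> injective t -> (forall k, t k \in L) ->
  exists2 u : seq T, subseq u L /\ size u = s &
    exists sigma : 'S_s, forall k, t k = nth x0 u (sigma k).
Proof.
move=> L_uniq t_inj tL.
pose u := [seq x <- L | x \in codom t].
have mem_u x : (x \in u) = (x \in codom t).
  by rewrite mem_filter andb_idr // => /codomP [k ->].
have size_u : size u = s.
  have codom_uniq : uniq (codom t) by apply/injectiveP.
  by rewrite (perm_size (uniq_perm (filter_uniq _ L_uniq) codom_uniq mem_u)) size_codom card_ord.
have index_lt k : (index (t k) u < s)%N by rewrite -size_u index_mem mem_u codom_f.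
have sigma_inj : injective (fun k => Ordinal (index_lt k)).
  by move=> k l [] /(congr1 (nth x0 u)); rewrite !nth_index ?mem_u ?codom_f // => /t_inj.
exists u; first by split; [exact: filter_subseq | exact: size_u].
by exists (perm sigma_inj) => k; rewrite permE nth_index // mem_u codom_f.
Qed.

Lemma injective_lift_map (S T : eqType) (g : S -> T) (x0 : S) (L : seq S) (s : nat)
    (f : 'I_s -> T) :
  injective f -> (forall k, f k \in map g L) ->
  exists t : 'I_s -> S, [/\ injective t, forall k, t k \in L & forall k, f k = g (t k)].
Proof.
move=> f_inj fL; pose t k := nth x0 L (index (f k) (map g L)).
have ft k : f k = g (t k).
  by rewrite -(nth_map x0 (g x0)) ?nth_index // -(size_map g) index_mem.
exists t; split=> // [k l /(congr1 g) | k]; first by rewrite -!ft => /f_inj.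
by rewrite mem_nth // -(size_map g) index_mem.
Qed.

(* Reordering the reactions permutes the rows of the reactant and of the
   reaction matrix alike; the two signs of the permutation cancel. *)
Lemma orientation_perm (s : nat) (f F : 'I_s -> reaction s) (sigma : 'S_s) :
  (forall k, f k = F (sigma k)) -> orientation f = orientation F.
Proof.
move=> fF.
have reactantE : reactant_mx f = row_perm sigma (reactant_mx F).
  by apply/matrixP => k i; rewrite !mxE fF.
have reactionE : reaction_mx f = row_perm sigma (reaction_mx F).
  by apply/matrixP => k i; rewrite !mxE fF.
rewrite /orientation reactantE reactionE !row_permE !det_mulmx det_perm.
by rewrite mulrACA -expr2 sqrr_sign mul1r.
Qed.

Definition reaction_of_lists {s : nat} (p : seq int * seq int) : reaction s :=
  (\row_(i < s) nth 0 p.1 i, \row_(i < s) nth 0 p.2 i).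

Definition lists_orientation (s : nat) (u : seq (seq int * seq int)) : int :=
  let p k := nth ([::], [::]) u k in
  sgz (cdet s (fun k i => nth 0 (p k).1 i) * cdet s (fun k i => nth 0 (p k).1 i - nth 0 (p k).2 i)).

Lemma orientation_of_lists (s : nat) (u : seq (seq int * seq int)) :
  orientation (fun k : 'I_s => reaction_of_lists (nth ([::], [::]) u k)) = lists_orientation s u.
Proof.
rewrite /orientation /lists_orientation /= -!det_cdet.
by congr (sgz (_ * _)); congr (\det _); apply/matrixP => k i; rewrite !mxE.
Qed.

(* Coordinates (reactant, product) of the non-inflow reactions of the
   network, in the order of [network_G]: the three reversible pairs, then
   the outflows of A, ..., F. *)
Definition table : seq (seq int * seq int) :=
  [:: ([:: 0;0;0;1;0;0], [:: 1;1;1;0;0;0]); ([:: 1;1;1;0;0;0], [:: 0;0;0;1;0;0]);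
      ([:: 0;0;0;0;1;0], [:: 1;1;1;0;0;0]); ([:: 1;1;1;0;0;0], [:: 0;0;0;0;1;0]);
      ([:: 0;0;0;0;0;1], [:: 1;1;0;0;0;0]); ([:: 1;1;0;0;0;0], [:: 0;0;0;0;0;1]);
      ([:: 1;0;0;0;0;0], [::]); ([:: 0;1;0;0;0;0], [::]); ([:: 0;0;1;0;0;0], [::]);
      ([:: 0;0;0;1;0;0], [::]); ([:: 0;0;0;0;1;0], [::]); ([:: 0;0;0;0;0;1], [::])].

Lemma enum_I6 : enum 'I_6 = [:: sA; sB; sC; sD; sE; sF].
Proof. by apply: (inj_map val_inj); rewrite val_enum_ord /= !inordK. Qed.

Lemma network_G_table (ins : seq 'I_6) :
  network_G ins = map reaction_of_lists table ++ [seq inflow i | i <- ins].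
Proof.
rewrite /network_G catA enum_I6; congr (_ ++ _) => /=.
apply: (@eq_from_nth _ (0, 0)) => //.
move=> -[|[|[|[|[|[|[|[|[|[|[|[|k]]]]]]]]]]]] // _;
  rewrite /= /reaction_of_lists /outflow; congr pair;
  apply/rowP => -[[|[|[|[|[|[|j]]]]]] Hj] //;
  rewrite !mxE /sA /sB /sC /sD /sE /sF -?val_eqE /= ?inordK //.
Qed.

Lemma noninflow_in_table (ins : seq 'I_6) (x : reaction 6) :
  x \in network_G ins -> ~~ is_inflow x -> x \in map reaction_of_lists table.
Proof.
rewrite network_G_table mem_cat => /orP [// | /mapP [i _ ->]].
by rewrite /is_inflow /= eqxx /= => /existsPn /(_ i); rewrite eqxx.
Qed.

Lemma table_uniq : uniq table.
Proof. by []. Qed.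

Lemma table_orientations : all (fun u => 0 <= lists_orientation 6 u) (sublists 6 table).
Proof. by vm_compute. Qed.

Theorem mainTheorem11 (ins : seq 'I_6) :
  passes_Jacobian_criterion (network_G ins).
Proof.
move=> f f_inj f_net f_noninflow.
have f_table k : f k \in map reaction_of_lists table.
  exact: noninflow_in_table (f_net k) (f_noninflow k).
have [t [t_inj t_table ft]] := injective_lift_map ([::], [::]) f_inj f_table.
have [u [u_sub u_size] [sigma tu]] := injective_sublist ([::], [::]) table_uniq t_inj t_table.
rewrite (@orientation_perm _ f (fun k => reaction_of_lists (nth ([::], [::]) u k)) sigma).
  rewrite orientation_of_lists; apply: (allP table_orientations).
  by rewrite -u_size; apply: mem_sublists.
by move=> k; rewrite ft tu.
Qed.
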